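(* Consider the delayed online convex optimization setting described in the context, with a non-empty, closed, convex domain $\mathcal{X}\subseteq\mathbb{R}^n$. Let $\lambda>0$, $G\ge0$, and assume each $f_t$ is $\lambda$-strongly convex with respect to the Euclidean norm and satisfies $\max_{x\in\mathcal{X}}\|\nabla f_t(x)\|_2\le G$. Consider the learner (Delayed OMD) with learning rates $\eta_t=\frac{2}{t\lambda}$, which plays an arbitrary $x_1\in\mathcal{X}$ and, for each $t\ge1$, after observing $g_\tau$ for all $\tau\in o_{t+1}\setminus o_t$, plays $$x_{t+1}=\arg\min_{x\in\mathcal{X}}\ \sum_{\tau\in o_{t+1}\setminus o_t}\langle g_\tau,x\rangle+\frac{1}{\eta_t}\|x-x_t\|_2^2 .$$ Then $$\mathrm{Reg}_T=\mathcal{O}\left(\frac{G^2}{\lambda}\left(\ln T+\min\{\sigma_{\max}\ln T,\sqrt{d_{\mathrm{tot}}}\}\right)\right),$$ i.e. there is an absolute numerical constant $C>0$ such that for every $T\ge2$, $\mathrm{Reg}_T\le C\frac{G^2}{\lambda}\left(\ln T+\min\{\sigma_{\max}\ln T,\sqrt{d_{\mathrm{tot}}}\}\right)$.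
   Context: Delayed OCO setting: $T\ge1$ and $n\ge1$ are integers, $[T]=\{1,\dots,T\}$. For each round $t\in[T]$ the learner chooses $x_t\in\mathcal{X}$ and incurs loss $f_t(x_t)$, where $f_t:\mathcal{X}\to\mathbb{R}$ is convex and differentiable (possibly adversarial). The gradient $g_t=\nabla f_t(x_t)$ is revealed only at the end of round $t+d_t$, where $d_t\in\{0,1,2,\dots\}$ is an arbitrary delay unknown to the learner, with $t+d_t\le T$ for all $t\in[T]$. For $t\ge1$ define $o_t=\{\tau\in\mathbb{N}:\tau+d_\tau<t\}\subseteq[t-1]$ and $m_t=[t-1]\setminus o_t$. Let $\sigma_{\max}=\max_{t\in[T]}|m_t|$ and $d_{\mathrm{tot}}=\sum_{t=1}^Td_t$. The regret is $\mathrm{Reg}_T=\sup_{u\in\mathcal{X}}\sum_{t=1}^T(f_t(x_t)-f_t(u))$. *)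

From HB Require Import structures.
From mathcomp Require Import all_boot all_order all_algebra.
From mathcomp Require Import all_classical all_reals all_analysis.
Set Implicit Arguments. Unset Strict Implicit. Unset Printing Implicit Defensive.
Import Order.TTheory GRing.Theory Num.Theory.
Import numFieldNormedType.Exports.
Local Open Scope classical_set_scope.
Local Open Scope ring_scope.

Section Defs.
Variables (R : realType) (n : nat).
Notation vec := 'rV[R]_n.

Definition dotp (u v : vec) : R := \sum_(i < n) u 0 i * v 0 i.
Definition norm2 (u : vec) : R := Num.sqrt (dotp u u).

Definition grad (f : vec -> R) (x : vec) : vec :=
  \row_(i < n) ('d f x (delta_mx 0 i : vec)).

Definition convex_dom (X : set vec) : Prop :=
  forall x y (a : R), X x -> X y -> 0 <= a <= 1 -> X (a *: x + (1 - a) *: y).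

Definition strongly_convex_on (lam : R) (X : set vec) (f : vec -> R) : Prop :=
  forall x y (a : R), X x -> X y -> 0 <= a <= 1 ->
    f (a *: x + (1 - a) *: y) <=
      a * f x + (1 - a) * f y - lam / 2 * a * (1 - a) * (norm2 (x - y)) ^+ 2.

(* Delays: o_t = {tau in N, tau >= 1 : tau + d tau < t} *)
Definition in_o (d : nat -> nat) (t tau : nat) : bool :=
  (1 <= tau)%N && (tau + d tau < t)%N.

(* |m_t| = |[t-1] \ o_t| *)
Definition card_m (d : nat -> nat) (t : nat) : nat :=
  #|[set tau : 'I_t | (1 <= tau)%N && ~~ in_o d t tau]|.

Definition sigma_max (d : nat -> nat) (T : nat) : nat :=
  \max_(1 <= t < T.+1) card_m d t.

Definition d_tot (d : nat -> nat) (T : nat) : nat := \sum_(1 <= t < T.+1) d t.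

Definition omd_obj (d : nat -> nat) (g : nat -> vec) (eta : R) (xt : vec)
  (t : nat) (x : vec) : R :=
  \sum_(0 <= tau < t.+1 | in_o d t.+1 tau && ~~ in_o d t tau) dotp (g tau) x
  + eta^-1 * (norm2 (x - xt)) ^+ 2.

End Defs.

From HB Require Import structures.
From mathcomp Require Import all_boot all_order all_algebra.
From mathcomp Require Import all_classical all_reals all_analysis.
From mathcomp Require Import ring lra.
Set Implicit Arguments. Unset Strict Implicit. Unset Printing Implicit Defensive.
Import Order.TTheory GRing.Theory Num.Theory.
Import numFieldNormedType.Exports.
Local Open Scope classical_set_scope.
Local Open Scope ring_scope.

(* Round t of delayed OMD is a proximal step
   x_{t+1} = argmin_X <P_t, x> + (t lam / 2) |x - x_t|^2, where P_t is the sum of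
   the S_t gradients arriving at the end of round t, so that |P_t| <= S_t G.  The
   usual analysis of a proximal step bounds its length by S_t G / (t lam) and
   <P_t, x_t - u> by (t lam / 2)(|x_t - u|^2 - |x_{t+1} - u|^2) + (S_t G)^2 / (2 t lam).

   By strong convexity, f_tau(x_tau) - f_tau(u) is at most
   <g_tau, x_{tau + d_tau} - u> + <g_tau, x_tau - x_{tau + d_tau}> - (lam/2)|x_tau - u|^2.
   Regrouped by arrival time, the first terms are the <P_t, x_t - u>, whose bounds
   telescope against the last ones; the drift term is at most G |x_tau - x_{tau + d_tau}|,
   which is bounded both by the diameter 2 G / lam and by the sum of the step lengths.
   The regret is thus at most
   (G^2 / lam) (sum_t S_t^2 / (2 t) + sum_tau min(2, sum_{tau <= s < tau + d_tau} S_s / s)).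

   The rest is counting.  Since S_t <= 1 + sigma_max and at most sigma_max gradients
   are outstanding at any time, the bracket is at most 2 (1 + sigma_max) H_T.  Since
   S_t^2 <= 2 sum_{tau + d_tau = t} (d_tau + 1), and rounds tau > sqrt(d_tot) contribute
   terms of size d_tau / sqrt(d_tot), it is also at most H_T + 7 sqrt(d_tot).  Finally
   H_T <= 1 + ln T <= 3 ln T for T >= 2. *)

Section Euclidean.
Variables (R : realType) (n : nat).
Implicit Types (u v w : 'rV[R]_n) (a : R).

Lemma dotpC u v : dotp u v = dotp v u.
Proof. by apply: eq_bigr => i _; rewrite mulrC. Qed.

Lemma dotpDl u v w : dotp (u + v) w = dotp u w + dotp v w.
Proof. by rewrite /dotp -big_split; apply: eq_bigr => i _; rewrite !mxE mulrDl. Qed.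

Lemma dotpZl a u v : dotp (a *: u) v = a * dotp u v.
Proof. by rewrite /dotp mulr_sumr; apply: eq_bigr => i _; rewrite !mxE mulrA. Qed.

Lemma dotpNl u v : dotp (- u) v = - dotp u v.
Proof. by rewrite -scaleN1r dotpZl mulN1r. Qed.

Lemma dotpBl u v w : dotp (u - v) w = dotp u w - dotp v w.
Proof. by rewrite dotpDl dotpNl. Qed.

Lemma dotpDr u v w : dotp u (v + w) = dotp u v + dotp u w.
Proof. by rewrite dotpC dotpDl !(dotpC u). Qed.

Lemma dotpZr a u v : dotp u (a *: v) = a * dotp u v.
Proof. by rewrite dotpC dotpZl dotpC. Qed.

Lemma dotpNr u v : dotp u (- v) = - dotp u v.
Proof. by rewrite dotpC dotpNl dotpC. Qed.

Lemma dotpBr u v w : dotp u (v - w) = dotp u v - dotp u w.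
Proof. by rewrite dotpDr dotpNr. Qed.

Lemma dotp0l v : dotp 0 v = 0.
Proof. by rewrite -(scale0r 0) dotpZl mul0r. Qed.

Lemma dotp_suml (I : Type) (r : seq I) (P : pred I) (F : I -> 'rV[R]_n) v :
  dotp (\sum_(i <- r | P i) F i) v = \sum_(i <- r | P i) dotp (F i) v.
Proof. by elim/big_rec2: _ => [|i y1 y2 _ <-]; rewrite ?dotp0l ?dotpDl. Qed.

Lemma dotp_sumr (I : Type) (r : seq I) (P : pred I) (F : I -> 'rV[R]_n) v :
  dotp v (\sum_(i <- r | P i) F i) = \sum_(i <- r | P i) dotp v (F i).
Proof. by rewrite dotpC dotp_suml; apply: eq_bigr => i _; rewrite dotpC. Qed.

Lemma dotp_sqrD u v : dotp (u + v) (u + v) = dotp u u + 2 * dotp u v + dotp v v.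
Proof. by rewrite dotpDl !dotpDr (dotpC v u); ring. Qed.

Lemma dotp_ge0 u : 0 <= dotp u u.
Proof. by apply: sumr_ge0 => i _; rewrite -expr2 sqr_ge0. Qed.

Lemma dotp_eq0 u : (dotp u u == 0) = (u == 0).
Proof.
apply/idP/eqP => [|->]; last by rewrite dotp0l.
rewrite psumr_eq0 => [/allP u0|i _]; last by rewrite -expr2 sqr_ge0.
apply/rowP => i; have /implyP := u0 i (mem_index_enum _).
by rewrite -expr2 sqrf_eq0 mxE => /(_ isT)/eqP.
Qed.

Lemma norm2_ge0 u : 0 <= norm2 u.
Proof. exact: sqrtr_ge0. Qed.

Lemma norm2_sqr u : norm2 u ^+ 2 = dotp u u.
Proof. by rewrite sqr_sqrtr // dotp_ge0. Qed.

Lemma norm2_eq0 u : (norm2 u == 0) = (u == 0).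
Proof. by rewrite -sqrf_eq0 norm2_sqr dotp_eq0. Qed.

Lemma norm2_distC u v : norm2 (u - v) = norm2 (v - u).
Proof. by rewrite -opprB /norm2 dotpNl dotpNr opprK. Qed.

Lemma cauchy_schwarz u v : dotp u v <= norm2 u * norm2 v.
Proof.
set a := norm2 u; set b := norm2 v.
have ab_ge0 : 0 <= a * b by rewrite mulr_ge0 ?norm2_ge0.
have : 0 <= 2 * (a * b) * (a * b - dotp u v).
  rewrite (_ : _ * _ = dotp (b *: u - a *: v) (b *: u - a *: v)) ?dotp_ge0 //.
  by rewrite !dotpBl !dotpBr !dotpZl !dotpZr (dotpC v u) -!norm2_sqr -/a -/b; ring.
have [ab0|ab_gt0] := eqVneq (a * b) 0; last first.
  by rewrite pmulr_rge0 ?subr_ge0 // mulr_gt0 // lt_def ab_gt0.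
move: ab0 => /eqP; rewrite mulf_eq0 !norm2_eq0 => /orP[] /eqP->.
  by rewrite dotp0l.
by rewrite dotpC dotp0l.
Qed.

End Euclidean.

Lemma cvg_affine_at_right (R : realType) (a b : R) :
  (fun h => a + h * b) @ 0^'+ --> a.
Proof.
rewrite -[X in _ --> X]addr0 -[X in _ --> _ + X](mul0r b).
apply: cvg_at_right_filter.
by apply: cvgD; [exact: cvg_cst | apply: cvgM; [exact: cvg_id | exact: cvg_cst]].
Qed.

Section StrongConvexity.
Variables (R : realType) (n : nat).
Implicit Types (X : set 'rV[R]_n) (f : 'rV[R]_n -> R).

Lemma diff_grad f x v : 'd f x v = dotp (grad f x) v.
Proof.
rewrite {1}(row_sum_delta v) linear_sum; apply: eq_bigr => i _.
by rewrite linearZ /= mxE mulrC.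
Qed.

Lemma strongly_convex_first_order X f (lam : R) x y :
  strongly_convex_on lam X f -> differentiable f x -> X x -> X y ->
  f x + dotp (grad f x) (y - x) + lam / 2 * norm2 (y - x) ^+ 2 <= f y.
Proof.
move=> sc df Xx Xy; set v := y - x; set N := lam / 2 * norm2 v ^+ 2.
pose q h := h^-1 *: ((f \o shift x) (h *: v) - f x).
have q_cvg : q @ 0^'+ --> dotp (grad f x) v.
  rewrite -diff_grad -deriveE //.
  exact/cvg_dnbhs_at_right/diff_derivable.
have q_le : \forall h \near 0^'+, q h <= f y - f x - N + h * N.
  near=> h.
  have h_gt0 : 0 < h by near: h; exact: nbhs_right_gt.
  have h_le1 : h <= 1 by near: h; apply: nbhs_right_le; exact: ltr01.
  have hvx : h *: v + x = h *: y + (1 - h) *: x.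
    by rewrite scalerBl scale1r addrA addrAC /v scalerBr.
  have := sc y x h Xy Xx; rewrite ltW //= h_le1 -hvx -/v => /(_ isT) sc_h.
  rewrite /q /= -[_ *: _]/(h^-1 * _) ler_pdivrMl // (_ : h * (_ + h * N) =
    h * f y + (1 - h) * f x - lam / 2 * h * (1 - h) * norm2 v ^+ 2 - f x) ?lerD2r //.
  by rewrite /N; ring.
have := ler_cvg_to q_cvg (cvg_affine_at_right N) q_le.
by move=> /(_ (at_right_proper_filter 0)); lra.
Unshelve. all: end_near.
Qed.

Lemma strongly_convex_dist_le X f (lam G : R) x y :
  strongly_convex_on lam X f -> 0 < lam ->
  (forall z, X z -> differentiable f z) ->
  (forall z, X z -> norm2 (grad f z) <= G) ->
  X x -> X y -> norm2 (x - y) <= 2 * G / lam.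
Proof.
move=> sc lam_gt0 df gf Xx Xy.
have grad_le z w : X z -> - dotp (grad f z) w <= G * norm2 w.
  move=> Xz; rewrite -dotpNr; apply: le_trans (cauchy_schwarz _ _) _.
  by rewrite /norm2 dotpNl dotpNr opprK ler_wpM2r ?norm2_ge0 ?gf.
have := strongly_convex_first_order sc (df x Xx) Xx Xy.
have := strongly_convex_first_order sc (df y Xy) Xy Xx.
have := grad_le x (y - x) Xx; have := grad_le y (x - y) Xy.
rewrite (norm2_distC y x); set N := norm2 (x - y) => h1 h2 h3 h4.
have N_ge0 : 0 <= N := norm2_ge0 _.
rewrite ler_pdivlMr //.
have [N_gt0|] := ltP 0 N; last by have := gf x Xx; have := norm2_ge0 (grad f x); nra.
rewrite -(ler_pM2r N_gt0); nra.
Qed.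

End StrongConvexity.

Lemma amgm_le (R : realFieldType) (a b c : R) : 0 < c -> a * b <= c * b ^+ 2 + a ^+ 2 / (4 * c).
Proof.
move=> c_gt0; rewrite -subr_ge0 (_ : _ - _ = (a - 2 * c * b) ^+ 2 / (4 * c)).
  by rewrite divr_ge0 ?sqr_ge0 ?mulr_ge0 ?ltW.
by field; rewrite gt_eqF.
Qed.

Section ProxStep.
Variables (R : realType) (n : nat) (X : set 'rV[R]_n) (c : R) (p z xp : 'rV[R]_n).
Hypotheses (cX : convex_dom X) (c_gt0 : 0 < c) (Xxp : X xp).
Hypothesis xp_min : forall y, X y ->
  dotp p xp + c * norm2 (xp - z) ^+ 2 <= dotp p y + c * norm2 (y - z) ^+ 2.

Lemma prox_vi y : X y -> 0 <= dotp p (y - xp) + 2 * c * dotp (xp - z) (y - xp).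
Proof.
move=> Xy; set w := y - xp; set L := _ + _; set K := c * dotp w w.
have L_near : \forall e \near 0^'+, 0 <= L + e * K.
  near=> e.
  have e_gt0 : 0 < e by near: e; exact: nbhs_right_gt.
  have e_le1 : e <= 1 by near: e; apply: nbhs_right_le; exact: ltr01.
  have Xe : X (xp + e *: w).
    rewrite (_ : _ + _ = e *: y + (1 - e) *: xp); first by apply: cX; rewrite ?ltW ?e_le1.
    by rewrite /w scalerBr scalerBl scale1r addrCA addrA.
  have := xp_min Xe; rewrite -subr_ge0 (_ : _ - _ = e * (L + e * K)) ?pmulr_rge0 //.
  rewrite (addrAC xp) !norm2_sqr (dotp_sqrD (xp - z)) (dotpDr p) !dotpZl !dotpZr.
  by rewrite /L /K; ring.
have := cvgr_to_ge (cvg_affine_at_right K) L_near.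
by apply; exact: at_right_proper_filter.
Unshelve. all: end_near.
Qed.

Variable B : R.
Hypotheses (B_ge0 : 0 <= B) (p_le : forall w, dotp p w <= B * norm2 w).

Lemma prox_step_le : X z -> norm2 (xp - z) <= B / (2 * c).
Proof.
move=> Xz; have vi := prox_vi Xz; have pB := p_le (z - xp).
have sq : dotp (xp - z) (z - xp) = - norm2 (xp - z) ^+ 2.
  by rewrite -(opprB xp z) dotpNr norm2_sqr.
rewrite sq in vi; rewrite (norm2_distC z) in pB.
set s := norm2 (xp - z) in vi pB *.
rewrite ler_pdivlMr ?mulr_gt0 //.
have [s_gt0|s_le0] := ltP 0 s; first by rewrite -(ler_pM2r s_gt0); nra.
by rewrite (@le_anti _ _ s 0) ?s_le0 ?norm2_ge0 ?mul0r.
Qed.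

Lemma prox_regret_le u : X u ->
  dotp p (z - u) <= c * (norm2 (z - u) ^+ 2 - norm2 (xp - u) ^+ 2) + B ^+ 2 / (4 * c).
Proof.
move=> Xu; have vi := prox_vi Xu; have p_a := p_le (z - xp).
set a := z - xp in p_a *; set b := xp - u.
have -> : z - u = a + b by rewrite /a /b addrA subrK.
rewrite -(opprB xp u) -/b -(opprB z xp) -/a dotpNl !dotpNr opprK in vi.
rewrite dotpDr norm2_sqr dotp_sqrD -!norm2_sqr.
set s := norm2 a in p_a *.
have := amgm_le B s c_gt0; nra.
Qed.

End ProxStep.

Section NatSums.
Variable R : realType.
Implicit Types F : nat -> R.

Lemma sum_nat_kronecker (a b k : nat) F : (a <= k < b)%N ->
  \sum_(a <= t < b) (k == t)%:R * F t = F k.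
Proof.
move=> hk; rewrite (bigD1_seq k) /= ?mem_index_iota ?iota_uniq // eqxx mul1r.
by rewrite big1 ?addr0 // => i /negPf; rewrite eq_sym => ->; rewrite mul0r.
Qed.

Lemma sum_nat_indicator (a b m k : nat) F : (a <= m)%N -> (k <= b)%N ->
  \sum_(m <= s < k) F s = \sum_(a <= s < b) ((m <= s)%N && (s < k)%N)%:R * F s.
Proof.
move=> am kb; have [mk|km] := leqP m k; last first.
  rewrite big_geq 1?ltnW //; symmetry; apply: big1 => i _.
  case: andP => [[mi ik]|]; last by rewrite mul0r.
  by have := ltn_trans (leq_ltn_trans mi ik) km; rewrite ltnn.
rewrite [RHS](@big_cat_nat _ _ _ m) ?(leq_trans mk kb) //=.
rewrite [X in _ + X](@big_cat_nat _ _ _ k) //=.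
rewrite [X in _ = X + _]big1_seq ?add0r; last first.
  by move=> i /andP[_]; rewrite mem_index_iota => /andP[_ im]; rewrite leqNgt im mul0r.
rewrite [X in _ = _ + X]big1_seq ?addr0; last first.
  by move=> i /andP[_]; rewrite mem_index_iota => /andP[ki _]; rewrite [(i < k)%N]ltnNge ki andbF mul0r.
by apply: eq_big_nat => i /andP[-> ->]; rewrite mul1r.
Qed.

Lemma sum_indicator_le (a b m k : nat) :
  \sum_(a <= i < b) ((m <= i)%N && (i < k)%N)%:R <= (k - m)%:R :> R.
Proof.
pose c := maxn b k.
have [ab|ba] := leqP a b; last by rewrite big_geq ?ler0n // ltnW.
apply: (@le_trans _ _ (\sum_(0 <= i < c) ((m <= i)%N && (i < k)%N)%:R)).
  rewrite [X in _ <= X](@big_cat_nat _ _ _ a) ?(leq_trans ab (leq_maxl b k)) //=.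
  rewrite [X in _ <= _ + X](@big_cat_nat _ _ _ b) ?leq_maxl //= addrCA lerDl.
  by rewrite addr_ge0 // sumr_ge0.
have := sum_nat_indicator (fun=> 1) (leq0n m) (leq_maxr b k).
rewrite sumr_const_nat => ->.
by apply: ler_sum => i _; rewrite mulr1.
Qed.

Lemma invr_natD_le (a k : nat) : (0 < a)%N -> ((a + k)%:R)^-1 <= (a%:R)^-1 :> R.
Proof.
move=> a_gt0; rewrite lef_pV2 ?posrE ?ltr0n ?ler_nat ?leq_addr //.
exact: leq_trans a_gt0 (leq_addr _ _).
Qed.

Lemma min_le_addr (c X A B : R) : X <= A + B -> 0 <= B -> Num.min c X <= Num.min c A + B.
Proof.
move=> hX hB; have [_|_] := leP c A.
  by rewrite ge_min lerDl hB.
by rewrite ge_min hX orbT.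
Qed.

Lemma count_le_real (K : R) N : 0 <= K -> \sum_(1 <= k < N.+1) (k%:R <= K)%R%:R <= K.
Proof.
move=> K_ge0; suff : \sum_(1 <= k < N.+1) (k%:R <= K)%R%:R <= Num.min N%:R K.
  by move/le_trans; apply; rewrite ge_min lexx orbT.
elim: N => [|N IH]; first by rewrite big_geq // le_min lexx K_ge0.
rewrite big_nat_recr //=; have [NK|_] := boolP (N.+1%:R <= K)%R.
  by rewrite (min_l NK) -natr1 lerD2r (le_trans IH) // ge_min lexx.
by rewrite addr0 (le_trans IH) // le_min !ge_min ler_nat leqnSn lexx orbT.
Qed.

End NatSums.

Definition harmonic (R : realType) (N : nat) : R := \sum_(1 <= k < N.+1) (k%:R)^-1.

Lemma harmonic_ge0 (R : realType) N : 0 <= harmonic R N.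
Proof. by apply: sumr_ge0 => k _; rewrite invr_ge0. Qed.

Section DelaySums.
Variables (R : realType) (d : nat -> nat) (T : nat).
Hypothesis hd : forall t, (1 <= t <= T)%N -> (t + d t <= T)%N.
Local Notation sigma := ((sigma_max d T)%:R : R).

(* [arrivals t] is |o_{t+1} \ o_t|, the number of gradients used at the end of round t. *)
Definition arrivals t : R := \sum_(1 <= tau < T.+1) ((tau + d tau)%N == t)%:R.

Definition stability_sum : R := \sum_(1 <= t < T.+1) arrivals t ^+ 2 / t%:R.

Definition drift_sum : R :=
  \sum_(1 <= tau < T.+1) Num.min 2 (\sum_(tau <= s < tau + d tau) arrivals s / s%:R).

Lemma arrival_in_range tau : (1 <= tau < T.+1)%N -> (1 <= tau + d tau < T.+1)%N.
Proof.
move=> /andP[tau_ge1 tau_le]; rewrite (leq_trans tau_ge1 (leq_addr _ _)) ltnS.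
by apply: hd; rewrite tau_ge1 -ltnS.
Qed.

Lemma sum_by_arrival (F : nat -> nat -> R) :
  \sum_(1 <= t < T.+1) \sum_(1 <= tau < T.+1) ((tau + d tau)%N == t)%:R * F tau t
  = \sum_(1 <= tau < T.+1) F tau (tau + d tau)%N.
Proof.
rewrite exchange_big /=; apply: eq_big_nat => tau htau.
exact/sum_nat_kronecker/arrival_in_range.
Qed.

Lemma sum_arrivalsM (F : nat -> R) :
  \sum_(1 <= t < T.+1) arrivals t * F t = \sum_(1 <= tau < T.+1) F (tau + d tau)%N.
Proof.
rewrite -(sum_by_arrival (fun _ t => F t)); apply: eq_bigr => t _.
by rewrite mulr_suml.
Qed.

Lemma arrivals_ge0 t : 0 <= arrivals t.
Proof. exact: sumr_ge0. Qed.

Lemma sum_arrivals_div_le : \sum_(1 <= t < T.+1) arrivals t / t%:R <= harmonic R T.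
Proof.
rewrite (sum_arrivalsM (fun t => t%:R^-1)); apply: ler_sum_nat => tau /andP[tau_gt0 _].
exact: invr_natD_le.
Qed.

Lemma card_mE t : (card_m d t)%:R = \sum_(1 <= tau < t) (t <= tau + d tau)%N%:R :> R.
Proof.
rewrite /card_m -sum1_card.
have -> : (\sum_(i in [set tau : 'I_t | (1 <= tau)%N && ~~ in_o d t tau]) 1 =
           \sum_(0 <= i < t) ((1 <= i) && (t <= i + d i))%N)%N.
  rewrite big_mkord big_mkcond /=; apply: eq_bigr => i _.
  rewrite (_ : (i \in _) = ((1 <= i)%N && ~~ in_o d t i)); last first.
    by apply/idP/idP => [/set_mem|h]; [|apply: mem_set].
  by rewrite /in_o; case: (0 < i)%N => //=; rewrite -leqNgt; case: (t <= i + d i)%N.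
rewrite natr_sum; have [->|t_gt0] := posnP t; first by rewrite !big_geq.
by rewrite big_ltn //= add0r; apply: eq_big_nat => i /andP[->].
Qed.

Lemma outstanding_le t : (1 <= t <= T)%N ->
  \sum_(1 <= tau < t) (t <= tau + d tau)%N%:R <= sigma.
Proof.
move=> /andP[t_ge1 t_le]; rewrite -card_mE ler_nat.
by apply: (@leq_bigmax_seq _ _ _ (card_m d) t) => //; rewrite mem_index_iota t_ge1 ltnS.
Qed.

Lemma arrivals_le t : (1 <= t <= T)%N -> arrivals t <= 1 + sigma.
Proof.
(* Apart from g_t itself, a gradient arriving at t is still outstanding at round t. *)
move=> t_in; have /andP[t_ge1 t_le] := t_in.
apply: le_trans (lerD (lexx 1) (outstanding_le t_in)).
have one : \sum_(1 <= tau < T.+1) (t == tau)%:R * 1 = 1 :> R.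
  by apply: sum_nat_kronecker; rewrite t_ge1 ltnS.
rewrite -{1}one /arrivals.
rewrite [X in _ + X](@sum_nat_indicator _ 1 T.+1) ?(leqW t_le) // -big_split /=.
apply: ler_sum_nat => tau /andP[tau_ge1 _].
have [arr|] := eqVneq (tau + d tau)%N t; last by rewrite mulr0n addr_ge0 ?mulr_ge0 ?ler0n.
have [->|tau_ne] := eqVneq tau t; first by rewrite mulr1 lerDl mulr_ge0 ?ler0n.
have tau_lt : (tau < t)%N by rewrite ltn_neqAle tau_ne -arr leq_addr.
by rewrite tau_ge1 tau_lt -arr leqnn mulr0n mul0r add0r mulr1.
Qed.

Lemma pending_le s : (1 <= s <= T)%N ->
  \sum_(1 <= tau < T.+1) ((tau <= s)%N && (s < tau + d tau)%N)%:R <= sigma.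
Proof.
move=> /andP[s_ge1 s_le]; have [->|s_ne] := eqVneq s T.
  rewrite big1_seq ?ler0n // => tau /andP[_]; rewrite mem_index_iota => tau_in.
  by rewrite ltnNge hd ?andbF // -ltnS.
have s_lt : (s.+1 <= T)%N by rewrite ltn_neqAle s_ne s_le.
apply: le_trans (outstanding_le (t := s.+1) _); last by rewrite s_lt.
rewrite [X in _ <= X](@sum_nat_indicator _ 1 T.+1) ?ltnS ?(ltnW s_lt) //.
apply: ler_sum_nat => tau /andP[tau_ge1 _].
by rewrite tau_ge1 ltnS /=; case: (tau <= s)%N; rewrite ?mul1r ?mul0r.
Qed.

Lemma stability_sum_le_sigma : stability_sum <= (1 + sigma) * harmonic R T.
Proof.
rewrite /stability_sum (eq_bigr (fun t => arrivals t * (arrivals t / t%:R))); last first.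
  by move=> t _; rewrite mulrA.
rewrite sum_arrivalsM /harmonic mulr_sumr; apply: ler_sum_nat => tau tau_in.
have /arrival_in_range/andP[a_ge1 a_lt] := tau_in; rewrite ltnS in a_lt.
apply: ler_pM; rewrite ?arrivals_ge0 ?invr_ge0 ?ler0n ?arrivals_le ?a_ge1 //.
by apply: invr_natD_le; case/andP: tau_in.
Qed.

Lemma drift_inner_indicator tau : (1 <= tau < T.+1)%N ->
  \sum_(tau <= s < tau + d tau) arrivals s / s%:R =
  \sum_(1 <= s < T.+1) ((tau <= s)%N && (s < tau + d tau)%N)%:R * (arrivals s / s%:R).
Proof.
move=> tau_in; have /andP[_ a_lt] := arrival_in_range tau_in.
by apply: sum_nat_indicator; [case/andP: tau_in | exact: ltnW].
Qed.

Lemma drift_sum_le_sigma : drift_sum <= sigma * harmonic R T.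
Proof.
apply: (@le_trans _ _ (\sum_(1 <= tau < T.+1) \sum_(tau <= s < tau + d tau) arrivals s / s%:R)).
  by apply: ler_sum_nat => tau _; rewrite ge_min lexx orbT.
rewrite (eq_big_nat _ _ drift_inner_indicator) exchange_big /=.
apply: le_trans (_ : \sum_(1 <= s < T.+1) sigma * (arrivals s / s%:R) <= _); last first.
  by rewrite -mulr_sumr ler_wpM2l ?ler0n ?sum_arrivals_div_le.
apply: ler_sum_nat => s s_in; rewrite -mulr_suml ler_wpM2r ?divr_ge0 ?arrivals_ge0 //.
by apply: pending_le; rewrite -ltnS.
Qed.

Lemma delay_sums_le_sigma :
  stability_sum / 2 + drift_sum <= 2 * (1 + sigma) * harmonic R T.
Proof.
have := stability_sum_le_sigma; have := drift_sum_le_sigma; have := harmonic_ge0 R T.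
have : 0 <= sigma * harmonic R T by rewrite mulr_ge0 ?ler0n ?harmonic_ge0.
nra.
Qed.

Local Notation dtot := ((d_tot d T)%:R : R).

Definition late_sum : R := \sum_(1 <= tau < T.+1) (d tau)%:R / (tau + d tau)%N%:R.

Definition delay_ratio_sum : R := \sum_(1 <= tau < T.+1) Num.min 2 ((d tau)%:R / tau%:R).

Lemma delay_le_dtot tau : (1 <= tau < T.+1)%N -> (d tau)%:R <= dtot.
Proof.
move=> tau_in; rewrite natr_sum (bigD1_seq tau) /= ?mem_index_iota ?iota_uniq //.
by rewrite lerDl sumr_ge0.
Qed.

Lemma sum_le_sqrt_dtot (c : R) (h : nat -> R) : 1 <= c ->
  (forall tau, (1 <= tau < T.+1)%N ->
     [/\ 0 <= h tau, h tau <= c & h tau <= (d tau)%:R / tau%:R]) ->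
  \sum_(1 <= tau < T.+1) h tau <= (c + 1) * Num.sqrt dtot.
Proof.
move=> c_ge1 hP; set K := Num.sqrt dtot; have K_ge0 : 0 <= K := sqrtr_ge0 _.
(* Rounds tau <= K contribute at most c each, later ones at most d_tau / K. *)
apply: (@le_trans _ _ (\sum_(1 <= tau < T.+1) (c * (tau%:R <= K)%R%:R + (d tau)%:R / K))).
  apply: ler_sum_nat => tau tau_in; have [h_ge0 h_le_c h_le_d] := hP tau tau_in.
  have [_|K_lt] := leP (tau%:R) K.
    by rewrite mulr1 (le_trans h_le_c) // lerDl divr_ge0 ?ler0n.
  rewrite mulr0 add0r (le_trans h_le_d) //.
  have [K_gt0|K_le0] := ltP 0 K.
    by rewrite ler_wpM2l ?ler0n // lef_pV2 ?posrE ?ltW // (lt_trans K_gt0).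
  suff -> : (d tau)%:R = 0 :> R by rewrite !mul0r.
  apply/eqP; rewrite eq_le ler0n andbT (le_trans (delay_le_dtot tau_in)) //.
  by rewrite -sqrtr_eq0 -/K eq_le K_le0 K_ge0.
rewrite big_split /= -mulr_sumr -mulr_suml -[X in X / _]natr_sum mulrDl mul1r.
apply: lerD; first by apply: ler_wpM2l; [exact: le_trans ler01 c_ge1 | exact: count_le_real].
have [->|K_neq0] := eqVneq K 0; first by rewrite invr0 mulr0.
by rewrite -[X in X / _](sqr_sqrtr (ler0n _ _)) -/K expr2 mulrK // unitfE.
Qed.

Lemma late_sum_le : late_sum <= 2 * Num.sqrt dtot.
Proof.
rewrite -[2]/(1 + 1); apply: sum_le_sqrt_dtot => // tau /andP[tau_ge1 _].
have a_gt0 : (0 < (tau + d tau)%N%:R :> R) by rewrite ltr0n addn_gt0 tau_ge1.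
split; first by rewrite divr_ge0 ?ler0n.
  by rewrite ler_pdivrMr // mul1r ler_nat leq_addl.
by rewrite ler_wpM2l ?ler0n ?invr_natD_le.
Qed.

Lemma delay_ratio_sum_le : delay_ratio_sum <= 3 * Num.sqrt dtot.
Proof.
rewrite (_ : 3 = 2 + 1); last by rewrite -natr1.
apply: sum_le_sqrt_dtot; first by rewrite ler1n.
by move=> tau _; split; rewrite ?ge_min ?lexx ?orbT // le_min divr_ge0 ?ler0n.
Qed.

Lemma arrivals_sqr_le t :
  arrivals t ^+ 2 <= 2 * \sum_(1 <= tau < T.+1) ((tau + d tau)%N == t)%:R * (d tau).+1%:R.
Proof.
(* Count the ordered pairs tau <= tau' of gradients arriving at t: given tau, the
   round tau' lies in [tau, t], which has d_tau + 1 elements. *)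
pose M tau tau' : R := ((tau + d tau)%N == t)%:R * ((tau' + d tau')%N == t)%:R.
pose half := \sum_(1 <= tau < T.+1) \sum_(1 <= tau' < T.+1) M tau tau' * (tau <= tau')%N%:R.
have M_ge0 tau tau' : 0 <= M tau tau' by rewrite mulr_ge0 ?ler0n.
have sqr_le : arrivals t ^+ 2 <= half + half.
  have half_sym : half = \sum_(1 <= tau < T.+1) \sum_(1 <= tau' < T.+1) M tau tau' * (tau' <= tau)%N%:R.
    rewrite /half exchange_big /=; apply: eq_bigr => tau _; apply: eq_bigr => tau' _.
    by rewrite /M (mulrC ((tau' + _)%N == t)%:R).
  rewrite {2}half_sym.
  rewrite expr2 mulr_suml -big_split /=; apply: ler_sum_nat => tau _.
  rewrite mulr_sumr -big_split /=; apply: ler_sum_nat => tau' _.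
  rewrite -[X in X <= _]/(M tau tau') -mulrDr.
  have [le|lt] := leqP tau tau'; last by rewrite (ltnW lt) mulr0n add0r mulr1.
  rewrite mulr1n -[X in X <= _]mulr1; apply: ler_wpM2l => //.
  by rewrite lerDl ler0n.
apply: le_trans sqr_le _; rewrite -mulr2n -[half *+ 2]mulr_natl; apply: ler_wpM2l => //.
apply: ler_sum_nat => tau _.
have [arr|arr_ne] := eqVneq (tau + d tau)%N t; last first.
  by rewrite mulr0n mul0r big1 // => tau' _; rewrite /M (negbTE arr_ne) !mul0r.
rewrite mulr1n mul1r; apply: (@le_trans _ _
    (\sum_(1 <= tau' < T.+1) ((tau <= tau')%N && (tau' < t.+1)%N)%:R)); last first.
  by apply: le_trans (sum_indicator_le R _ _ _ _) _; rewrite -arr subSn ?leq_addr // addKn.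
apply: ler_sum_nat => tau' _; rewrite /M arr eqxx mul1r.
have [arr'|] := eqVneq (tau' + d tau')%N t; last by rewrite mul0r ler0n.
by rewrite mul1r -arr' ltnS leq_addr andbT.
Qed.

Lemma stability_sum_le_dtot : stability_sum <= 2 * harmonic R T + 2 * late_sum.
Proof.
apply: (@le_trans _ _ (\sum_(1 <= t < T.+1) (2 *
    \sum_(1 <= tau < T.+1) ((tau + d tau)%N == t)%:R * ((d tau).+1%:R / t%:R)))).
  apply: ler_sum_nat => t _; under eq_bigr do rewrite mulrA.
  rewrite -mulr_suml mulrA.
  by apply: ler_wpM2r; rewrite ?invr_ge0 ?ler0n ?arrivals_sqr_le.
rewrite -mulr_sumr (sum_by_arrival (fun tau t => (d tau).+1%:R / t%:R)) -mulrDr.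
rewrite ler_wpM2l // -big_split /=; apply: ler_sum_nat => tau /andP[tau_ge1 _].
by rewrite -addn1 natrD mulrDl mul1r addrC lerD2l invr_natD_le.
Qed.

Definition pending_weight tau : R := \sum_(1 <= tau' < T.+1)
  ((tau' < tau)%N && (tau <= tau' + d tau')%N)%:R / (tau' + d tau')%N%:R.

Lemma drift_inner_le tau : (1 <= tau < T.+1)%N ->
  \sum_(tau <= s < tau + d tau) arrivals s / s%:R <= (d tau)%:R / tau%:R + pending_weight tau.
Proof.
move=> tau_in; have /andP[tau_ge1 _] := tau_in.
rewrite drift_inner_indicator //.
under eq_bigr do rewrite mulrCA.
rewrite sum_arrivalsM.
apply: (@le_trans _ _ (\sum_(1 <= tau' < T.+1)
    (((tau <= tau')%N && (tau' < tau + d tau)%N)%:R / tau%:R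
     + ((tau' < tau)%N && (tau <= tau' + d tau')%N)%:R / (tau' + d tau')%N%:R))).
  apply: ler_sum_nat => tau' /andP[tau'_ge1 _].
  have [/andP[b1 b2]|] := boolP ((tau <= tau' + d tau')%N && (tau' + d tau' < tau + d tau)%N);
    last by rewrite mul0r addr_ge0 ?divr_ge0 ?ler0n.
  rewrite mul1r; have [le|lt] := leqP tau tau'; last by rewrite b1 /= mul1r lerDr mul0r.
  rewrite (leq_ltn_trans (leq_addr _ _) b2) mul1r /= mul0r addr0.
  by apply: (le_trans (invr_natD_le R (d tau') tau'_ge1)); rewrite lef_pV2 ?posrE ?ltr0n ?ler_nat.
rewrite big_split /= -mulr_suml lerD2r ler_wpM2r ?invr_ge0 ?ler0n //.
by apply: le_trans (sum_indicator_le R _ _ _ _) _; rewrite addKn.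
Qed.

Lemma drift_sum_le_dtot : drift_sum <= delay_ratio_sum + late_sum.
Proof.
apply: (@le_trans _ _ (\sum_(1 <= tau < T.+1)
    (Num.min 2 ((d tau)%:R / tau%:R) + pending_weight tau))).
  apply: ler_sum_nat => tau tau_in; apply: min_le_addr; first exact: drift_inner_le.
  by rewrite sumr_ge0 // => tau' _; rewrite divr_ge0 ?ler0n.
rewrite big_split /= lerD2l /pending_weight exchange_big /=; apply: ler_sum_nat => tau' _.
rewrite -mulr_suml ler_wpM2r ?invr_ge0 ?ler0n //.
under eq_bigr => tau _ do rewrite -[(tau <= _)%N]ltnS.
by apply: le_trans (sum_indicator_le R _ _ _ _) _; rewrite subSS addKn.
Qed.

Lemma delay_sums_le_dtot :
  stability_sum / 2 + drift_sum <= harmonic R T + 7 * Num.sqrt dtot.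
Proof.
have := stability_sum_le_dtot; have := drift_sum_le_dtot.
have := late_sum_le; have := delay_ratio_sum_le.
lra.
Qed.

End DelaySums.

Lemma sum_weighted_telescope (R : realType) (D : nat -> R) N : (1 <= N)%N ->
  \sum_(1 <= t < N) t%:R * (D t - D t.+1) + N%:R * D N = \sum_(1 <= t < N.+1) D t.
Proof.
elim: N => [|N IH] // _; have [->|N_gt0] := posnP N.
  by rewrite big_geq // big_nat1 mul1r add0r.
by rewrite big_nat_recr //= [RHS]big_nat_recr //= -(IH N_gt0) -natr1; ring.
Qed.

Section DelayedOMD.
Variables (R : realType) (n T : nat) (X : set 'rV[R]_n)
  (f : nat -> 'rV[R]_n -> R) (d : nat -> nat) (lam G : R) (x : nat -> 'rV[R]_n).
Hypotheses (cX : convex_dom X) (lam_gt0 : 0 < lam) (G_ge0 : 0 <= G).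
Hypothesis hd : forall t, (1 <= t <= T)%N -> (t + d t <= T)%N.
Hypothesis hf : forall t, (1 <= t <= T)%N ->
  (forall y, X y -> differentiable (f t) y) /\
  strongly_convex_on lam X (f t) /\
  (forall y, X y -> norm2 (grad (f t) y) <= G).
Hypothesis X_x1 : X (x 1%N).
Hypothesis hx : forall t, (1 <= t < T)%N ->
  X (x t.+1) /\
  forall y, X y ->
    omd_obj d (fun tau => grad (f tau) (x tau)) (2 / (t%:R * lam)) (x t) t (x t.+1)
    <= omd_obj d (fun tau => grad (f tau) (x tau)) (2 / (t%:R * lam)) (x t) t y.

Local Notation g tau := (grad (f tau) (x tau)).
Local Notation arrivals := (arrivals R d T).

Lemma iterate_in_dom t : (1 <= t <= T)%N -> X (x t).
Proof.
case: t => [|t] // /andP[_ t_lt]; have [->|t_gt0] := posnP t; first by [].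
by have [] := hx (t := t); rewrite ?t_gt0.
Qed.

Lemma grad_norm_le tau : (1 <= tau <= T)%N -> norm2 (g tau) <= G.
Proof. by move=> tau_in; have [_ [_ /(_ _ (iterate_in_dom tau_in))]] := hf tau_in. Qed.

Definition arrived_grad t : 'rV[R]_n :=
  \sum_(1 <= tau < T.+1) ((tau + d tau)%N == t)%:R *: g tau.

Lemma dotp_arrived_grad t w :
  dotp (arrived_grad t) w = \sum_(1 <= tau < T.+1) ((tau + d tau)%N == t)%:R * dotp (g tau) w.
Proof. by rewrite dotp_suml; apply: eq_bigr => tau _; rewrite dotpZl. Qed.

Lemma dotp_arrived_grad_le t w : dotp (arrived_grad t) w <= arrivals t * G * norm2 w.
Proof.
rewrite dotp_arrived_grad -mulrA mulr_suml; apply: ler_sum_nat => tau /andP[tau_ge1 tau_lt].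
rewrite ler_wpM2l ?ler0n //; apply: le_trans (cauchy_schwarz _ _) _.
by rewrite ler_wpM2r ?norm2_ge0 ?grad_norm_le // tau_ge1 -ltnS.
Qed.

Lemma omd_objE t y : (1 <= t < T)%N ->
  omd_obj d (fun tau => g tau) (2 / (t%:R * lam)) (x t) t y =
  dotp (arrived_grad t) y + t%:R * lam / 2 * norm2 (y - x t) ^+ 2.
Proof.
move=> /andP[t_ge1 t_lt]; rewrite /omd_obj invf_div; congr (_ + _).
rewrite dotp_arrived_grad big_mkcond /= [RHS](@big_cat_nat _ _ _ t.+1) //=; last first.
  by rewrite ltnS ltnW.
rewrite [X in _ = _ + X]big1_seq ?addr0; last first.
  move=> tau /andP[_]; rewrite mem_index_iota => /andP[tau_gt _].
  by rewrite gtn_eqF ?mul0r // (leq_trans tau_gt (leq_addr _ _)).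
rewrite big_ltn //= /in_o /= add0r; apply: eq_big_nat => tau /andP[tau_ge1 _].
rewrite tau_ge1 /= ltnS -leqNgt.
case: eqVneq => [->|arr_ne]; first by rewrite leqnn mul1r.
by rewrite mul0r; case: ifP => // /andP[le ge]; move: arr_ne; rewrite eqn_leq le ge.
Qed.

Lemma omd_prox_min t : (1 <= t < T)%N -> forall y, X y ->
  dotp (arrived_grad t) (x t.+1) + t%:R * lam / 2 * norm2 (x t.+1 - x t) ^+ 2
  <= dotp (arrived_grad t) y + t%:R * lam / 2 * norm2 (y - x t) ^+ 2.
Proof. by move=> t_in y Xy; rewrite -!omd_objE //; apply: (hx t_in).2. Qed.

Lemma step_coef_gt0 t : (1 <= t)%N -> 0 < t%:R * lam / 2.
Proof. by move=> t_ge1; rewrite divr_gt0 ?mulr_gt0 ?ltr0n. Qed.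

Lemma omd_step_le t : (1 <= t < T)%N ->
  norm2 (x t.+1 - x t) <= arrivals t * G / (t%:R * lam).
Proof.
move=> t_in; have /andP[t_ge1 t_lt] := t_in.
have := prox_step_le cX (step_coef_gt0 t_ge1) (hx t_in).1 (omd_prox_min t_in)
  (mulr_ge0 (arrivals_ge0 _ _ _ _) G_ge0) (dotp_arrived_grad_le t).
rewrite (_ : 2 * _ = t%:R * lam); last by field.
by apply; apply: iterate_in_dom; rewrite t_ge1 ltnW.
Qed.

Variable u : 'rV[R]_n.
Hypothesis X_u : X u.

Local Notation dist2 t := (norm2 (x t - u) ^+ 2).

Lemma omd_round_le t : (1 <= t < T)%N ->
  dotp (arrived_grad t) (x t - u) <=
  t%:R * lam / 2 * (dist2 t - dist2 t.+1) + (arrivals t * G) ^+ 2 / (2 * (t%:R * lam)).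
Proof.
move=> t_in; have /andP[t_ge1 _] := t_in.
have := prox_regret_le cX (step_coef_gt0 t_ge1) (hx t_in).1 (omd_prox_min t_in)
  (dotp_arrived_grad_le t) X_u.
by rewrite (_ : 4 * _ = 2 * (t%:R * lam)) //; field.
Qed.

Lemma omd_last_round_le : (1 <= T)%N ->
  dotp (arrived_grad T) (x T - u) <=
  T%:R * lam / 2 * dist2 T + (arrivals T * G) ^+ 2 / (2 * (T%:R * lam)).
Proof.
move=> T_ge1; apply: le_trans (dotp_arrived_grad_le _ _) _.
have := amgm_le (arrivals T * G) (norm2 (x T - u)) (step_coef_gt0 T_ge1).
by rewrite (_ : 4 * _ = 2 * (T%:R * lam)) //; field.
Qed.

Lemma sum_arrived_regret_le : (1 <= T)%N ->
  \sum_(1 <= t < T.+1) dotp (arrived_grad t) (x t - u) <=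
  lam / 2 * \sum_(1 <= t < T.+1) dist2 t
  + \sum_(1 <= t < T.+1) (arrivals t * G) ^+ 2 / (2 * (t%:R * lam)).
Proof.
move=> T_ge1; rewrite -(sum_weighted_telescope (fun t => dist2 t) T_ge1) !big_nat_recr //=.
have rounds := ler_sum_nat omd_round_le; rewrite big_split /= in rounds.
rewrite mulrDr; have -> : lam / 2 * \sum_(1 <= t < T) t%:R * (dist2 t - dist2 t.+1) =
    \sum_(1 <= t < T) t%:R * lam / 2 * (dist2 t - dist2 t.+1).
  by rewrite mulr_sumr; apply: eq_bigr => t _; ring.
have := omd_last_round_le T_ge1; lra.
Qed.

Lemma sum_arrived_gradE :
  \sum_(1 <= t < T.+1) dotp (arrived_grad t) (x t - u) =
  \sum_(1 <= tau < T.+1) dotp (g tau) (x (tau + d tau)%N - u).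
Proof.
rewrite -(sum_by_arrival hd (fun tau t => dotp (g tau) (x t - u))).
by apply: eq_bigr => t _; rewrite dotp_arrived_grad.
Qed.

Lemma delayed_drift_le tau : (1 <= tau <= T)%N ->
  dotp (g tau) (x tau - x (tau + d tau)%N) <=
  G ^+ 2 / lam * Num.min 2 (\sum_(tau <= s < tau + d tau) arrivals s / s%:R).
Proof.
move=> tau_in; have /andP[tau_ge1 tau_le] := tau_in.
have /andP[a_ge1 a_lt] := arrival_in_range hd (tau_in : (1 <= tau < T.+1)%N).
have X_a : X (x (tau + d tau)%N) by apply: iterate_in_dom; rewrite a_ge1 -ltnS.
have [df [sc gb]] := hf tau_in.
have coef_ge0 : 0 <= G ^+ 2 / lam by rewrite divr_ge0 ?sqr_ge0 ?ltW.
have diam_bound : dotp (g tau) (x tau - x (tau + d tau)%N) <= G ^+ 2 / lam * 2.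
  rewrite (_ : _ * 2 = G * (2 * G / lam)); last by field; rewrite gt_eqF.
  apply: le_trans (cauchy_schwarz _ _) (ler_pM (norm2_ge0 _) (norm2_ge0 _)
    (grad_norm_le tau_in) (strongly_convex_dist_le sc lam_gt0 df gb _ X_a)).
  exact: iterate_in_dom.
have path_bound : dotp (g tau) (x tau - x (tau + d tau)%N) <=
    G ^+ 2 / lam * \sum_(tau <= s < tau + d tau) arrivals s / s%:R.
  rewrite -opprB -(telescope_sumr x (leq_addr (d tau) tau)) -sumrN dotp_sumr mulr_sumr.
  apply: ler_sum_nat => s /andP[s_ge s_lt].
  have s_in : (1 <= s < T)%N.
    by rewrite (leq_trans tau_ge1 s_ge) (leq_trans s_lt) // -ltnS.
  have s_neq0 : (s%:R : R) != 0 by rewrite pnatr_eq0 -lt0n; case/andP: s_in.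
  rewrite (_ : _ * (_ / _) = G * (arrivals s * G / (s%:R * lam))); last first.
    by field; rewrite s_neq0 gt_eqF.
  rewrite opprB; apply: le_trans (cauchy_schwarz _ _) _; rewrite norm2_distC.
  exact: ler_pM (norm2_ge0 _) (norm2_ge0 _) (grad_norm_le tau_in) (omd_step_le s_in).
have [le2|lt2] := leP 2 (\sum_(tau <= s < tau + d tau) arrivals s / s%:R).
  exact: diam_bound.
exact: path_bound.
Qed.

Lemma omd_regret_le : (1 <= T)%N ->
  \sum_(1 <= t < T.+1) (f t (x t) - f t u) <=
  G ^+ 2 / lam * (stability_sum R d T / 2 + drift_sum R d T).
Proof.
move=> T_ge1.
have round_le tau : (1 <= tau < T.+1)%N -> f tau (x tau) - f tau u <=
    dotp (g tau) (x (tau + d tau)%N - u) + dotp (g tau) (x tau - x (tau + d tau)%N)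
    - lam / 2 * dist2 tau.
  rewrite ltnS => tau_in; have [df [sc _]] := hf tau_in.
  have -> : dotp (g tau) (x (tau + d tau)%N - u) + dotp (g tau) (x tau - x (tau + d tau)%N)
      = - dotp (g tau) (u - x tau).
    by rewrite -dotpDr -dotpNr opprB addrC addrA subrK.
  have := strongly_convex_first_order sc (df _ (iterate_in_dom tau_in)) (iterate_in_dom tau_in) X_u.
  rewrite norm2_distC; lra.
apply: le_trans (ler_sum_nat round_le) _.
rewrite !big_split /= -sum_arrived_gradE sumrN -mulr_sumr.
have := sum_arrived_regret_le T_ge1.
have : \sum_(1 <= tau < T.+1) dotp (g tau) (x tau - x (tau + d tau)%N) <=
    G ^+ 2 / lam * drift_sum R d T.
  by rewrite mulr_sumr; apply: ler_sum_nat => tau; rewrite ltnS => /delayed_drift_le.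
have -> : \sum_(1 <= t < T.+1) (arrivals t * G) ^+ 2 / (2 * (t%:R * lam)) =
    G ^+ 2 / lam * (stability_sum R d T / 2).
  rewrite /stability_sum mulr_suml mulr_sumr; apply: eq_big_nat => t /andP[t_ge1 _].
  by field; rewrite pnatr_eq0 -lt0n t_ge1 gt_eqF.
rewrite mulrDr; lra.
Qed.

End DelayedOMD.

Section Logarithm.
Variable R : realType.

Lemma inv_natS_le_lnB N : (1 <= N)%N -> (N.+1%:R : R)^-1 <= ln N.+1%:R - ln N%:R.
Proof.
move=> N_ge1; have N_gt0 : (0 : R) < N%:R by rewrite ltr0n.
have x_gt : -1 < - (N.+1%:R : R)^-1 by rewrite ltrN2 invf_lt1 ?ltr0n ?ltr1n.
have := le_ln1Dx x_gt.
rewrite (_ : 1 - _ = N%:R / N.+1%:R); last by rewrite -natr1; field; rewrite natr1 pnatr_eq0.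
by rewrite ln_div ?posrE ?ltr0n // -[ln N.+1%:R - _]opprB lerNr.
Qed.

Lemma harmonic_le_ln N : (1 <= N)%N -> harmonic R N <= 1 + ln N%:R.
Proof.
elim: N => [|N IH] // _; have [->|N_gt0] := posnP N.
  by rewrite /harmonic big_nat1 invr1 ln1 addr0.
have -> : harmonic R N.+1 = harmonic R N + (N.+1%:R)^-1 by rewrite /harmonic big_nat_recr.
have := IH N_gt0; have := inv_natS_le_lnB N_gt0.
by move: (N.+1%:R : R)^-1 => i; lra.
Qed.

Lemma ln_nat_ge_half N : (2 <= N)%N -> 1 / 2 <= ln (N%:R : R).
Proof.
move=> N_ge2; have N_gt0 : (0 : R) < N%:R by rewrite ltr0n; exact: leq_trans N_ge2.
have inv_le : (N%:R : R)^-1 <= 1 / 2 by rewrite mul1r lef_pV2 ?posrE ?N_gt0 ?ler_nat.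
have x_gt : -1 < (N%:R : R)^-1 - 1 by rewrite ltrBrDr addNr invr_gt0.
have := le_ln1Dx x_gt; rewrite addrC subrK lnV ?posrE //; lra.
Qed.

End Logarithm.

Lemma delay_sums_le (R : realType) (d : nat -> nat) (T : nat) :
  (forall t, (1 <= t <= T)%N -> (t + d t <= T)%N) -> (2 <= T)%N ->
  stability_sum R d T / 2 + drift_sum R d T <=
  7 * (ln (T%:R : R) + Num.min ((sigma_max d T)%:R * ln (T%:R : R)) (Num.sqrt (d_tot d T)%:R)).
Proof.
move=> hd T_ge2; have T_ge1 : (1 <= T)%N by exact: leq_trans T_ge2.
have := harmonic_le_ln R T_ge1; have := ln_nat_ge_half R T_ge2.
have := delay_sums_le_sigma R hd; have := delay_sums_le_dtot R hd.
have sigma_ge0 : (0 : R) <= (sigma_max d T)%:R by rewrite ler0n.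
have := sqrtr_ge0 ((d_tot d T)%:R : R).
set L := ln _; set s := (sigma_max d T)%:R; set K := Num.sqrt _; set H := harmonic R T.
move=> K_ge0 Q_le_K Q_le_s L_ge H_le.
have [sL_le|K_lt] := leP (s * L) K; last lra.
have : (1 + s) * H <= (1 + s) * (3 * L) by rewrite ler_wpM2l ?addr_ge0 //; lra.
have : 0 <= s * L by rewrite mulr_ge0 //; lra.
nra.
Qed.

Theorem theoremE1 :
  exists C : nat, (0 < C)%N /\
  forall (R : realType) (n T : nat) (X : set 'rV[R]_n)
         (f : nat -> 'rV[R]_n -> R) (d : nat -> nat) (lam G : R)
         (x : nat -> 'rV[R]_n),
    X !=set0 -> closed X -> convex_dom X ->
    0 < lam -> 0 <= G ->
    (forall t, (1 <= t <= T)%N -> (t + d t <= T)%N) ->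
    (forall t, (1 <= t <= T)%N ->
       (forall y, X y -> differentiable (f t) y) /\
       strongly_convex_on lam X (f t) /\
       (forall y, X y -> norm2 (grad (f t) y) <= G)) ->
    X (x 1%N) ->
    (forall t, (1 <= t < T)%N ->
       X (x t.+1) /\
       forall y, X y ->
         omd_obj d (fun tau => grad (f tau) (x tau)) (2 / (t%:R * lam)) (x t) t (x t.+1)
         <= omd_obj d (fun tau => grad (f tau) (x tau)) (2 / (t%:R * lam)) (x t) t y) ->
    (2 <= T)%N ->
    forall u, X u ->
      \sum_(1 <= t < T.+1) (f t (x t) - f t u) <=
        (C%:R : R) * (G ^+ 2 / lam) *
        (ln (T%:R : R) + Num.min ((sigma_max d T)%:R * ln (T%:R : R))
                                 (Num.sqrt ((d_tot d T)%:R))).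
Proof.
(* Non-emptiness and closedness of X only make the argmin exist; the iterates are given. *)
exists 7%N; split => // R n T X f d lam G x _ _ cX lam_gt0 G_ge0 hd hf X_x1 hx T_ge2 u X_u.
apply: le_trans (omd_regret_le cX lam_gt0 G_ge0 hd hf X_x1 hx X_u (ltnW T_ge2)) _.
rewrite -[X in _ <= X]mulrA [X in _ <= X]mulrCA; apply: ler_wpM2l; first by rewrite divr_ge0 ?sqr_ge0 ?ltW.
exact: delay_sums_le.
Qed.
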